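(* Let $\mathcal{T}$ be a finite tree, $w:V(\mathcal{T})\to\mathbb{R}_{\ge0}$, $m=w(\mathcal{T})$, and let $c$ be a centroid of $(\mathcal{T},w)$. Then $$\mathtt{OPT}(\mathcal{T},w)\ge\frac m2+\frac{w(c)}2+\sum_{\mathcal{H}\in\mathbb{C}(\mathcal{T}-c)}\mathtt{OPT}(\mathcal{H},w).$$
   Context: $\mathbb{C}(G)$ denotes the set of connected components of a graph $G$. For a subgraph $\mathcal{H}$, $w(\mathcal{H})=\sum_{x\in V(\mathcal{H})}w(x)$, and $w$ also denotes its restriction to $V(\mathcal{H})$. A search tree on a tree $\mathcal{T}$ is a rooted tree $T$ with vertex set $V(\mathcal{T})$ defined recursively: its root is an arbitrary vertex $r$, and the children of $r$ are the roots of search trees built on the connected components of $\mathcal{T}-r$; a single-vertex tree has only itself as search tree. $\mathtt{cost}_w(T)=\sum_x w(x)\,\mathtt{depth}_T(x)$ with root depth $1$; $\mathtt{OPT}(\mathcal{T},w)$ is the minimum cost over all search trees on $\mathcal{T}$. A vertex $v$ is a centroid of $(\mathcal{T},w)$ if each component $\mathcal{H}$ of $\mathcal{T}-v$ has $w(\mathcal{H})\le w(\mathcal{T})/2$. *)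

From HB Require Import structures.
From mathcomp Require Import all_boot all_order all_algebra.
From mathcomp Require Import classical_sets reals.
Set Implicit Arguments. Unset Strict Implicit. Unset Printing Implicit Defensive.
Import Order.TTheory GRing.Theory Num.Theory.

Section Defs.
Variable T : finType.
Variable e : rel T.

(* A finite tree: e symmetric and irreflexive (simple graph), connected,
   and without (simple) cycles of length >= 3. *)
Definition acyclic : Prop :=
  ~ exists (x : T) (p : seq T),
      [/\ path e x p, uniq (x :: p), 2 <= size p & e (last x p) x].
Definition is_tree : Prop :=
  [/\ symmetric e, irreflexive e, (forall x y, connect e x y) & acyclic].

Definition induced (S : {set T}) : rel T :=
  [rel x y | [&& e x y, x \in S & y \in S]].

Definition comps (S : {set T}) : {set {set T}} :=
  [set [set y in S | connect (induced S) x y] | x in S].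

Inductive stree : Type := SNode : T -> seq stree -> stree.

Fixpoint vset (t : stree) : {set T} :=
  match t with SNode r ts => r |: foldr (fun c acc => vset c :|: acc) finset.set0 ts end.

(* t is a search tree on (the subgraph induced by) S: its root r lies in S and
   its children are search trees on the components of S - r, one for each. *)
Fixpoint is_st (S : {set T}) (t : stree) : bool :=
  match t with
  | SNode r ts =>
      [&& r \in S, perm_eq (map vset ts) (enum (comps (S :\ r)))
        & all (fun c => is_st (vset c) c) ts]
  end.

Variable R : realType.
Variable w : T -> R.

(* cost_w(t) = sum_x w(x) * depth_t(x), root has depth 1 *)
Fixpoint costd (d : nat) (t : stree) : R :=
  match t with
  | SNode r ts => (d%:R * w r + foldr (fun c acc => costd d.+1 c + acc) 0 ts)%R
  end.
Definition cost (t : stree) : R := costd 1 t.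

Definition OPT (S : {set T}) : R :=
  inf [set x | exists t, is_st S t /\ cost t = x].

Definition allV : {set T} := @finset.setTfor T.

Definition wt (S : {set T}) : R := (\sum_(x in S) w x)%R.

Definition centroid (c : T) : Prop :=
  forall H, H \in comps (allV :\ c) -> (wt H <= wt allV / 2%:R)%R.
End Defs.

From HB Require Import structures.
From mathcomp Require Import all_boot all_order all_algebra.
From mathcomp Require Import reals.
From mathcomp Require boolp classical_sets.
From mathcomp Require Import ring lra.
Import Order.TTheory GRing.Theory Num.Theory.
Local Open Scope ring_scope.
Set Implicit Arguments. Unset Strict Implicit. Unset Printing Implicit Defensive.

(* Let OPTf(S) be the sum of OPT over the components of the subgraph induced by S.
   Rooting at r a search tree whose subtrees are near-optimal on the components of S - r
   gives OPT(S) <= w(S) + OPTf(S - r) for every r in S, with equality for the root of an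
   optimal tree.  Moreover OPTf(X) + OPTf(S - X) <= OPTf(S) for X a subset of S: give X
   and S - X separate weights; OPT is superadditive in the weight, and OPTf only grows
   when vertices of weight zero are added.
   Let r be an optimal root of T.  If r is not the centroid c, let H be the component of
   T - c containing r.  Splitting T - r into H - r, {c} and the other components of T - c,
   OPT(T) = m + OPTf(T - r) >= m + OPTf(H - r) + w(c) + OPTf(T - c - H)
                            >= m - w(H) + w(c) + OPTf(T - c),
   and w(H) <= m/2 concludes. *)

Section SearchTrees.
Variables (T : finType) (R : realType).
Implicit Types (t : stree T) (ts : seq (stree T)) (u v : T -> R).

Lemma stree_ind_In (P : stree T -> Prop) :
  (forall r ts, (forall c, List.In c ts -> P c) -> P (SNode r ts)) -> forall t, P t.
Proof.
move=> IH; fix F 1 => -[r ts]; apply: IH.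
elim: ts => [|c ts IHts] c' [] => [<-|]; [exact: F | exact: IHts].
Qed.

Lemma ler_sum_In (I : Type) (f g : I -> R) (s : seq I) :
  (forall i, List.In i s -> f i <= g i) -> \sum_(i <- s) f i <= \sum_(i <- s) g i.
Proof.
elim: s => [|i s IH] fg; rewrite ?big_nil ?big_cons //.
by apply: lerD; [apply: fg; left | apply: IH => j sj; apply: fg; right].
Qed.

Lemma all_In (A : Type) (p : pred A) (s : seq A) a : all p s -> List.In a s -> p a.
Proof. by elim: s => [|b s IH] //= /andP[pb ps] [<-|/IH]; last exact. Qed.

Lemma eq_big_In (I : Type) (f g : I -> R) (s : seq I) :
  (forall i, List.In i s -> f i = g i) -> \sum_(i <- s) f i = \sum_(i <- s) g i.
Proof. by move=> fg; apply/le_anti; rewrite !ler_sum_In // => i /fg ->. Qed.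

Lemma costdE u d r ts :
  costd u d (SNode r ts) = d%:R * u r + \sum_(c <- ts) costd u d.+1 c.
Proof. by rewrite /=; congr (_ + _); elim: ts => [|c ts /= ->]; rewrite ?big_nil ?big_cons. Qed.

Lemma vsetE r ts : vset (SNode r ts) = r |: \bigcup_(c <- ts) vset c.
Proof. by rewrite /=; congr (_ |: _); elim: ts => [|c ts /= ->]; rewrite ?big_nil ?big_cons. Qed.

Lemma vset_child r ts c : List.In c ts -> vset c \subset vset (SNode r ts).
Proof.
move=> cts; rewrite vsetE; apply: subset_trans (subsetUr _ _).
elim: ts cts => [|c' ts IH] //= [<-|/IH]; rewrite big_cons; first exact: subsetUl.
by move/subset_trans; apply; apply: subsetUr.
Qed.

Lemma costd_ge0 u d t : (forall x, 0 <= u x) -> 0 <= costd u d t.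
Proof.
move=> u0; elim/stree_ind_In: t d => r ts IH d; rewrite costdE addr_ge0 ?mulr_ge0 //.
apply: le_trans (ler_sum_In (f := fun=> 0) _); first by rewrite big1_eq.
by move=> c /IH; apply.
Qed.

Lemma costdD u v d t : costd (u \+ v) d t = costd u d t + costd v d t.
Proof.
elim/stree_ind_In: t d => r ts IH d.
by rewrite !costdE (eq_big_In (fun c cts => IH c cts _)) big_split /= mulrDr addrACA.
Qed.

Lemma eq_costd u v d t : {in vset t, u =1 v} -> costd u d t = costd v d t.
Proof.
elim/stree_ind_In: t d => r ts IH d uv.
rewrite !costdE uv ?vsetE ?setU11 //; congr (_ + _); apply: eq_big_In => c cts.
by apply: IH => // x /(subsetP (vset_child r cts)); apply: uv.
Qed.

End SearchTrees.

Section Weights.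
Variables (T : finType) (R : realType).
Implicit Types (A B : {set T}) (u : T -> R).

Lemma wt_setD1 u A x : x \in A -> wt u A = u x + wt u (A :\ x).
Proof. by move=> xA; rewrite /wt (big_setD1 x xA). Qed.

Lemma wt_subset u A B : (forall x, 0 <= u x) -> A \subset B -> wt u A <= wt u B.
Proof.
move=> u0 AB; rewrite /wt [X in _ <= X](big_setID A) /= (setIidPr AB).
by rewrite lerDl sumr_ge0.
Qed.

Lemma wt_supp u A B : A \subset B -> {in B :\: A, u =1 fun=> 0} -> wt u A = wt u B.
Proof.
move=> AB u_out; rewrite /wt [RHS](big_setID A) /= (setIidPr AB).
by rewrite [X in _ + X]big1 ?addr0.
Qed.

End Weights.

Section Components.
Variables (T : finType) (e : rel T).
Hypothesis e_sym : symmetric e.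
Implicit Types (S A B C H K : {set T}).

Definition comp S x := [set y in S | connect (induced e S) x y].

Definition separated A B := forall a b, a \in A -> b \in B -> ~~ e a b.

Lemma compsE S : comps e S = [set comp S x | x in S].
Proof. by []. Qed.

Lemma comp_in_comps S x : x \in S -> comp S x \in comps e S.
Proof. by move=> xS; apply/imsetP; exists x. Qed.

Lemma mem_comp S x : x \in S -> x \in comp S x.
Proof. by move=> xS; rewrite inE xS connect0. Qed.

Lemma connect_induced_sym S : connect_sym (induced e S).
Proof.
apply: sym_connect_sym => a b; rewrite /induced /= e_sym.
by case: (a \in S); case: (b \in S); rewrite ?andbF.
Qed.

Lemma comps_partition S : partition (comps e S) S.
Proof.
apply: equivalence_partitionP => x y z _ _ _; split; first exact: connect0.
move=> xy; apply/idP/idP; last exact: connect_trans.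
by apply: connect_trans; rewrite connect_induced_sym.
Qed.

Lemma comps_subset S C : C \in comps e S -> C \subset S.
Proof. by case/imsetP => x _ ->; apply/subsetP => y; rewrite inE => /andP[]. Qed.

Lemma comps_nonempty S C : C \in comps e S -> exists x, x \in C.
Proof. by case/imsetP => x xS ->; exists x; apply: mem_comp. Qed.

Lemma wt_comps (R : realType) (u : T -> R) S : \sum_(C in comps e S) wt u C = wt u S.
Proof.
by have /and3P[/eqP cov triv _] := comps_partition S; rewrite /wt -{2}cov big_trivIset.
Qed.

Lemma separatedS A B A' B' :
  A' \subset A -> B' \subset B -> separated A B -> separated A' B'.
Proof. by move=> /subsetP sA /subsetP sB sep a b /sA aA /sB; apply: sep. Qed.

Lemma comps_separated S K : K \in comps e S -> separated K (S :\: K).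
Proof.
case/imsetP => x xS -> a b; rewrite !inE => /andP[aS xa] /andP[nb bS].
apply: contra nb => ab; rewrite bS; apply: connect_trans xa (connect1 _).
by rewrite /induced /= ab aS bS.
Qed.

Lemma connect_induced_closed S A x y :
  separated A (S :\: A) -> A \subset S -> x \in A ->
  connect (induced e S) x y -> (y \in A) && connect (induced e A) x y.
Proof.
move=> sep /subsetP AS xA /connectP[p + ->]; elim: p x xA => [|z p IH] x xA /=.
  by rewrite xA connect0.
case/andP => /and3P[xz _ zS] zp; have zA : z \in A.
  by apply: contraT => zA; have := sep x z xA; rewrite inE zA zS xz => /(_ isT).
have /andP[-> zy] := IH z zA zp; apply: connect_trans zy.
by apply: connect1; rewrite /induced /= xz xA zA.
Qed.

Lemma comp_setU A B x : separated A B -> x \in A ->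
  comp (A :|: B) x = comp A x.
Proof.
move=> sep xA; apply/setP => y; rewrite !inE; apply/andP/andP => -[yS xy].
  apply/andP; apply: connect_induced_closed xy; rewrite ?subsetUl //.
  apply: separatedS sep; rewrite ?subxx //; apply/subsetP => b.
  by rewrite !inE => /andP[/negbTE -> /=].
split; first by rewrite yS.
apply: connect_sub xy => a b /and3P[ab aA bA]; apply: connect1.
by rewrite /induced /= ab !inE aA bA.
Qed.

Lemma comps_setU A B : separated A B -> comps e (A :|: B) = comps e A :|: comps e B.
Proof.
move=> sep; rewrite /comps imsetU; congr (_ :|: _); apply: eq_in_imset => x xA.
  exact: comp_setU.
rewrite setUC; apply: comp_setU => // b a bB aA; rewrite e_sym; exact: sep.
Qed.

Lemma comp_id S x y : y \in comp S x -> comp S y = comp S x.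
Proof.
rewrite inE => /andP[_ xy]; apply/setP => z; rewrite !inE; case: (z \in S) => //=.
apply/idP/idP; first exact: connect_trans.
by apply: connect_trans; rewrite connect_induced_sym.
Qed.

Lemma comp_comp S x : x \in S -> comp (comp S x) x = comp S x.
Proof.
move=> xS; have KS := comp_in_comps xS.
apply/setP => y; rewrite inE; apply/andP/idP => [[] //|yK]; split=> //.
move: (yK); rewrite inE => /andP[_ xy].
by case/andP: (connect_induced_closed (comps_separated KS) (comps_subset KS) (mem_comp xS) xy).
Qed.

Lemma comps_comp S K : K \in comps e S -> comps e K = [set K].
Proof.
rewrite compsE => /imsetP[x xS ->]; apply/setP => C; rewrite compsE inE.
apply/imsetP/eqP => [[y yK ->]|->]; last by exists x; rewrite ?mem_comp ?comp_comp.
have yS : y \in S by apply: (subsetP (comps_subset (comp_in_comps xS))).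
by rewrite -(comp_id yK) comp_comp.
Qed.

End Components.

Section SearchTreesOnGraphs.
Variables (T : finType) (e : rel T) (R : realType).
Hypothesis e_sym : symmetric e.
Implicit Types (S C : {set T}) (t : stree T) (ts : seq (stree T)) (u : T -> R).

Lemma big_children (f : {set T} -> R) S ts :
  perm_eq (map (@vset T) ts) (enum (comps e S)) ->
  \sum_(c <- ts) f (vset c) = \sum_(C in comps e S) f C.
Proof. by move=> p; rewrite -(big_map (@vset T) xpredT f) (perm_big _ p) big_enum. Qed.

Lemma vset_is_st S t : is_st e S t -> vset t = S.
Proof.
case: t => r ts /and3P[rS p _]; rewrite vsetE.
rewrite -(big_map (@vset T) xpredT id) (perm_big _ p) big_enum /=.
have /and3P[/eqP cov _ _] := comps_partition e_sym (S :\ r).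
by rewrite [X in r |: X]cov setD1K.
Qed.

Lemma sum_wt_children u S r ts : is_st e S (SNode r ts) ->
  \sum_(c <- ts) wt u (vset c) = wt u (S :\ r).
Proof. by case/and3P=> _ p _; rewrite (big_children (wt u) p) wt_comps. Qed.

Lemma costdS u S t d : is_st e S t -> costd u d.+1 t = costd u d t + wt u S.
Proof.
elim/stree_ind_In: t S d => r ts IH S d st; have /and3P[rS _ al] := st.
have IHts c : List.In c ts -> costd u d.+2 c = costd u d.+1 c + wt u (vset c).
  by move=> cts; apply: IH => //; exact: all_In al cts.
rewrite !costdE (eq_big_In IHts) big_split /= (sum_wt_children u st) (wt_setD1 u rS).
by rewrite -natr1; ring.
Qed.

Lemma cost_SNode u S r ts : is_st e S (SNode r ts) ->
  cost u (SNode r ts) = wt u S + \sum_(c <- ts) cost u c.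
Proof.
move=> st; have /and3P[rS _ al] := st.
have cost2 c : List.In c ts -> costd u 2 c = cost u c + wt u (vset c).
  by move=> cts; apply: costdS; exact: all_In al cts.
rewrite /cost costdE (eq_big_In cost2) big_split /= (sum_wt_children u st).
by rewrite (wt_setD1 u rS); ring.
Qed.

Lemma is_st_SNode S r (f : {set T} -> stree T) : r \in S ->
  (forall C, C \in comps e (S :\ r) -> is_st e C (f C)) ->
  is_st e S (SNode r (map f (enum (comps e (S :\ r))))).
Proof.
move=> rS stf; have vf : {in enum (comps e (S :\ r)), @vset T \o f =1 id}.
  by move=> C; rewrite mem_enum => /stf /vset_is_st.
rewrite /= rS -map_comp ((eq_in_map _ _ _).1 vf) map_id perm_refl all_map /=.
apply/allP => C CS; rewrite /= (vf C CS : vset (f C) = C).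
by move: CS; rewrite mem_enum => /stf.
Qed.

Lemma is_st_exists S x : x \in S -> exists t, is_st e S t.
Proof.
elim: {S}_.+1 {-2}S (ltnSn #|S|) x => // n IH S leSn x xS.
suff /boolp.choice[f stf] : forall C, exists t, C \in comps e (S :\ x) -> is_st e C t.
  by exists (SNode x (map f (enum (comps e (S :\ x))))); apply: is_st_SNode => // C /stf.
move=> C; case: (boolP (C \in comps e (S :\ x))) => [CS|]; last by exists (SNode x [::]).
have [y yC] := comps_nonempty CS.
have ltCn : (#|C| < n)%N.
  rewrite -ltnS (leq_trans _ leSn) // ltnS.
  by rewrite (leq_ltn_trans (subset_leq_card (comps_subset CS))) // (cardsD1 x S) xS.
by have [t st] := IH C ltCn y yC; exists t.
Qed.

End SearchTreesOnGraphs.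

Section Optimum.
Variables (T : finType) (e : rel T) (R : realType).
Hypothesis e_sym : symmetric e.
Implicit Types (S A B H K X : {set T}) (u v : T -> R).

Definition costs u S : classical_sets.set R :=
  fun c => exists t, is_st e S t /\ cost u t = c.

Lemma OPTE u S : OPT e u S = inf (costs u S).
Proof. by []. Qed.

Lemma costs_has_inf u S x : (forall y, 0 <= u y) -> x \in S ->
  classical_sets.has_inf (costs u S).
Proof.
move=> u0 xS; split; first by have [t st] := is_st_exists e_sym xS; exists (cost u t), t.
by exists 0 => _ [t [_ <-]]; apply: costd_ge0.
Qed.

Lemma OPT_le_cost u S t : (forall x, 0 <= u x) -> is_st e S t -> OPT e u S <= cost u t.
Proof.
move=> u0 st; rewrite OPTE; apply: ge_inf; last by exists t.
by exists 0 => _ [t' [_ <-]]; apply: costd_ge0.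
Qed.

Lemma OPT_ge u S x a : x \in S -> (forall t, is_st e S t -> a <= cost u t) -> a <= OPT e u S.
Proof.
move=> xS lea; rewrite OPTE; apply: lb_le_inf => [|_ [t [st <-]]]; last exact: lea.
by have [t st] := is_st_exists e_sym xS; exists (cost u t), t.
Qed.

Lemma cost_le_OPT_eps u S x eps : (forall y, 0 <= u y) -> x \in S -> 0 < eps ->
  exists2 t, is_st e S t & cost u t <= OPT e u S + eps.
Proof.
move=> u0 xS eps_gt0.
have [_ [t [st <-]] lt] := inf_adherent eps_gt0 (costs_has_inf u0 xS).
by exists t; rewrite // OPTE ltW.
Qed.

Definition OPTf u S := \sum_(C in comps e S) OPT e u C.

Lemma OPTf_set0 u : OPTf u set0 = 0.
Proof. by rewrite /OPTf compsE imset0 big_set0. Qed.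

Lemma OPTf_ge0 u S : (forall x, 0 <= u x) -> 0 <= OPTf u S.
Proof.
move=> u0; apply: sumr_ge0 => C CS; have [x xC] := comps_nonempty CS.
by apply: (OPT_ge xC) => t _; apply: costd_ge0.
Qed.

Lemma OPT_le_root u S r : (forall x, 0 <= u x) -> r \in S ->
  OPT e u S <= wt u S + OPTf u (S :\ r).
Proof.
move=> u0 rS; apply/ler_addgt0Pr => eps eps_gt0.
set n := #|comps e (S :\ r)|.
have eps'_gt0 : 0 < eps / n.+1%:R by rewrite divr_gt0 ?ltr0n.
suff /boolp.choice[f fP] : forall C, exists t, C \in comps e (S :\ r) ->
    is_st e C t /\ cost u t <= OPT e u C + eps / n.+1%:R.
  have st := is_st_SNode e_sym rS (fun C CS => (fP C CS).1).
  apply: le_trans (OPT_le_cost u0 st) _.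
  rewrite (cost_SNode e_sym u st) big_map big_enum /= -addrA lerD2l.
  apply: le_trans (ler_sum _ (fun C CS => (fP C CS).2)) _.
  rewrite big_split /= lerD2l sumr_const -/n -[_ *+ n]mulr_natr mulrAC.
  by rewrite ler_pdivrMr ?ltr0n // ler_pM2l // ler_nat.
move=> C; case: (boolP (C \in comps e (S :\ r))) => [CS|_]; last by exists (SNode r [::]).
have [x xC] := comps_nonempty CS.
by have [t st le] := cost_le_OPT_eps u0 xC eps'_gt0; exists t.
Qed.

Lemma OPT_ge_root u S x : (forall y, 0 <= u y) -> x \in S ->
  exists2 r, r \in S & wt u S + OPTf u (S :\ r) <= OPT e u S.
Proof.
move=> u0 xS; case: (arg_minP (fun r => OPTf u (S :\ r)) xS) => r rS rmin.
exists r => //; apply: (OPT_ge xS) => -[r' ts] st; have /and3P[r'S p al] := st.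
rewrite (cost_SNode e_sym u st) lerD2l (le_trans (rmin r' r'S)) //.
rewrite /OPTf -(big_children (OPT e u) p); apply: ler_sum_In => c cts.
by apply: OPT_le_cost => //; apply: all_In al cts.
Qed.

Lemma eq_OPT u v S : {in S, u =1 v} -> OPT e u S = OPT e v S.
Proof.
move=> uv; rewrite !OPTE; congr inf; apply: boolp.funext => c; apply: boolp.propext.
have cuv t : is_st e S t -> cost u t = cost v t.
  by move=> st; apply: eq_costd => x; rewrite (vset_is_st e_sym st) => /uv.
by split=> -[t [st <-]]; exists t; rewrite (cuv t st).
Qed.

Lemma OPT_superadditive u v S x : (forall y, 0 <= u y) -> (forall y, 0 <= v y) ->
  x \in S -> OPT e u S + OPT e v S <= OPT e (u \+ v) S.
Proof.
by move=> u0 v0 xS; apply: (OPT_ge xS) => t st; rewrite /cost costdD lerD ?OPT_le_cost.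
Qed.

Lemma OPT_set1 u x : (forall y, 0 <= u y) -> OPT e u [set x] = u x.
Proof.
move=> u0; have x1 := set11 x; apply/le_anti/andP; split.
  apply: le_trans (OPT_le_root u0 x1) _.
  by rewrite setDv OPTf_set0 /wt big_set1 addr0.
have [r _ le_root] := OPT_ge_root u0 x1; apply: le_trans le_root.
by rewrite /wt big_set1 lerDl OPTf_ge0.
Qed.

Lemma eq_OPTf u v S : {in S, u =1 v} -> OPTf u S = OPTf v S.
Proof.
move=> uv; apply: eq_bigr => C CS; apply: eq_OPT => x xC.
by apply: uv; apply: (subsetP (comps_subset CS)).
Qed.

Lemma OPTf_superadditive u v S : (forall x, 0 <= u x) -> (forall x, 0 <= v x) ->
  OPTf u S + OPTf v S <= OPTf (u \+ v) S.
Proof.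
move=> u0 v0; rewrite /OPTf -big_split /=; apply: ler_sum => C CS.
by have [x xC] := comps_nonempty CS; apply: OPT_superadditive xC.
Qed.

Lemma OPTf_setU u A B : [disjoint A & B] -> separated e A B ->
  OPTf u (A :|: B) = OPTf u A + OPTf u B.
Proof.
move=> dAB sep; rewrite /OPTf (comps_setU e_sym sep).
rewrite (eq_bigl [predU comps e A & comps e B]) ?bigU // => [|C]; last by rewrite !inE.
apply/pred0P => C /=; apply/negbTE/andP => -[CA CB].
have [x xC] := comps_nonempty CA; move/pred0P/(_ x): dAB => /=.
by rewrite (subsetP (comps_subset CA)) ?(subsetP (comps_subset CB)).
Qed.

Lemma OPTf_comp_id u S K : K \in comps e S -> OPTf u K = OPT e u K.
Proof. by move=> KS; rewrite /OPTf (comps_comp e_sym KS) big_set1. Qed.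

Lemma OPTf_set1 u x : (forall y, 0 <= u y) -> OPTf u [set x] = u x.
Proof.
move=> u0; have comp1 : comp e [set x] x = [set x].
  by apply/setP => y; rewrite !inE; case: eqP => [->|]; rewrite ?connect0.
have x1 : [set x] \in comps e [set x] by rewrite -{1}comp1 comp_in_comps ?set11.
by rewrite (OPTf_comp_id u x1) OPT_set1.
Qed.

Lemma OPTf_comps_split u S K H : K \in comps e S -> H \subset S ->
  OPTf u H = OPTf u (H :&: K) + OPTf u (H :\: K).
Proof.
move=> KS HS; rewrite -{1}(setID H K) OPTf_setU //.
  by apply/pred0P => y /=; rewrite !inE; case: (y \in K); rewrite ?andbF.
by apply: separatedS (comps_separated KS); rewrite ?subsetIr ?setSD.
Qed.

Lemma OPTf_comp u S K : K \in comps e S -> OPTf u S = OPT e u K + OPTf u (S :\: K).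
Proof.
move=> KS; rewrite (OPTf_comps_split u KS (subxx S)) (setIidPr (comps_subset KS)).
by rewrite (OPTf_comp_id u KS).
Qed.

Lemma OPTf_le_setD1 u H r : (forall x, 0 <= u x) -> OPTf u H <= wt u H + OPTf u (H :\ r).
Proof.
move=> u0; have [rH|rH] := boolP (r \in H); last first.
  by rewrite (setDidPl _) ?lerDr ?sumr_ge0 // disjoint_sym disjoints1.
have KH := comp_in_comps e rH; set K := comp e H r in KH *.
have rK : r \in K := mem_comp e rH.
have HrH : H :\ r \subset H := subsetDl _ _.
rewrite (OPTf_comp u KH) (OPTf_comps_split u KH HrH) setIDAC (setIidPr (comps_subset KH)).
rewrite setDDl (setUidPr _) ?sub1set // addrA lerD2r.
apply: le_trans (OPT_le_root u0 rK) _; rewrite lerD2r.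
exact: wt_subset (comps_subset KH).
Qed.

Lemma OPTf_mono u H S : (forall x, 0 <= u x) -> H \subset S ->
  {in S :\: H, u =1 fun=> 0} -> OPTf u H <= OPTf u S.
Proof.
move=> u0; elim: {S}_.+1 {-2}S (ltnSn #|S|) H => // n IH S leSn H HS u_out.
have IHS S' H' : S' \proper S -> H' \subset S' -> {in S' :\: H', u =1 fun=> 0} ->
    OPTf u H' <= OPTf u S'.
  by move=> ltS'S; apply: IH; apply: leq_trans (proper_card ltS'S) _.
have [S0|[x xS]] := set_0Vmem S.
  by move: HS; rewrite S0 subset0 => /eqP ->.
have KS := comp_in_comps e xS; set K := comp e S x in KS *.
have [KeqS|KneS] := eqVneq K S.
  move: KS; rewrite KeqS => SS; have [r rS OPT_root] := OPT_ge_root u0 xS.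
  rewrite (OPTf_comp_id u SS).
  apply: le_trans (OPTf_le_setD1 H r u0) (le_trans _ OPT_root).
  rewrite (wt_supp HS u_out) lerD2l IHS ?properD1 ?setSD // => y.
  rewrite !inE => /andP[yHr /andP[yr yS]]; apply: u_out.
  by rewrite !inE yS andbT; move: yHr; rewrite yr.
have KsubS := comps_subset KS.
rewrite (OPTf_comps_split u KS HS) (OPTf_comp u KS) -(OPTf_comp_id u KS).
apply: lerD; apply: IHS.
- by rewrite properEneq KneS.
- exact: subsetIr.
- move=> y; rewrite in_setD in_setI => /andP[yHK yK]; rewrite yK andbT in yHK.
  by apply: u_out; rewrite in_setD yHK (subsetP KsubS).
- rewrite properE subsetDl /=; apply/subsetPn; exists x => //.
  by rewrite in_setD mem_comp.
- exact: setSD.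
- move=> y; rewrite !in_setD => /andP[yHK /andP[yK yS]]; rewrite yK /= in yHK.
  by apply: u_out; rewrite in_setD yHK.
Qed.

Lemma OPTf_split u X S : (forall x, 0 <= u x) -> X \subset S ->
  OPTf u X + OPTf u (S :\: X) <= OPTf u S.
Proof.
move=> u0 XS; pose uX y := if y \in X then u y else 0.
pose uXc y := if y \in X then 0 else u y.
have uX0 y : 0 <= uX y by rewrite /uX; case: ifP.
have uXc0 y : 0 <= uXc y by rewrite /uXc; case: ifP.
rewrite (@eq_OPTf u uX X) => [|y yX]; last by rewrite /uX yX.
rewrite (@eq_OPTf u uXc (S :\: X)) => [|y]; last first.
  by rewrite in_setD /uXc => /andP[/negbTE ->].
rewrite (@eq_OPTf u (uX \+ uXc) S) => [|y _]; last first.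
  by rewrite /= /uX /uXc; case: ifP; rewrite ?addr0 ?add0r.
apply: le_trans (OPTf_superadditive _ uX0 uXc0); apply: lerD; apply: OPTf_mono => //.
- by move=> y; rewrite in_setD /uX => /andP[/negbTE ->].
- exact: subsetDl.
- move=> y; rewrite !in_setD negb_and negbK /uXc => /andP[/orP[-> //|/negbTE yS]].
  by rewrite yS.
Qed.

Lemma OPTf_setD1_ge u S c r : (forall x, 0 <= u x) -> c \in S -> r \in S :\ c ->
  OPTf u (comp e (S :\ c) r :\ r) + u c + OPTf u ((S :\ c) :\: comp e (S :\ c) r)
    <= OPTf u (S :\ r).
Proof.
move=> u0 cS rSc; set H := comp e (S :\ c) r.
have HSc : H \subset S :\ c := comps_subset (comp_in_comps e rSc).
have cH : c \notin H by apply: contraL cS => /(subsetP HSc); rewrite !inE eqxx.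
have HrSr : H :\ r \subset S :\ r by apply: setSD; apply: subset_trans HSc (subsetDl _ _).
have cR : [set c] \subset (S :\ r) :\: (H :\ r).
  rewrite sub1set in_setD !in_setD1 (negbTE cH) cS andbF andbT /= eq_sym.
  by case/setD1P: rSc.
have E : (S :\ r) :\: (H :\ r) :\: [set c] = (S :\ c) :\: H.
  apply/setP => y; rewrite !in_setD !in_set1.
  case: (eqVneq y r) => [->|yr] /=; first by rewrite (mem_comp e rSc) !andbF.
  by case: (y \in H); rewrite ?andbF.
apply: le_trans (OPTf_split u0 HrSr); rewrite -addrA lerD2l.
by apply: le_trans (OPTf_split u0 cR); rewrite E (OPTf_set1 _ u0).
Qed.

End Optimum.

Theorem lemma1 (R : realType) (T : finType) (e : rel T) (w : T -> R) (c : T) :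
  is_tree e ->
  (forall x, 0 <= w x) ->
  centroid e w c ->
  OPT e w (allV T) >=
    wt w (allV T) / 2%:R + w c / 2%:R
    + \sum_(H in comps e ((allV T) :\ c)) OPT e w H.
Proof.
case=> e_sym _ _ _ w0 cen; set V := allV T; have cV : c \in V by rewrite inE.
rewrite -/(OPTf e w (V :\ c)).
have [r rV OPT_root] := OPT_ge_root e_sym w0 cV.
have wV := wt_setD1 w cV; have wc0 := w0 c.
have wVc0 : 0 <= wt w (V :\ c) by apply: sumr_ge0.
have [rc|rc] := eqVneq r c; first by move: OPT_root; rewrite rc; lra.
have rVc : r \in V :\ c by rewrite in_setD1 rc.
have HV := comp_in_comps e rVc; set H := comp e (V :\ c) r in HV *.
have split_Vc := OPTf_comp e_sym w HV.
have OPT_H := OPT_le_root e_sym w0 (mem_comp e rVc).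
have split_Vr := OPTf_setD1_ge e_sym w0 cV rVc.
have wH := cen _ HV.
lra.
Qed.
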